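(* Fix an integer $d\ge 2$ and $\theta>0$. For the public goods game described in the context, with arbitrary real parameters $\mu_b,\mu_c,\sigma_b^2,\sigma_c^2,\sigma_{bc}$, we have $F>0$ if and only if $\sigma_{bc}-\sigma_c^2>2\mu_c$. In particular, this condition does not depend on $\theta$ or $d$. Moreover, $F$ is strictly decreasing in $\sigma_c^2$ and strictly increasing in $\sigma_{bc}$ when the other parameters are held fixed.
   Context: For integers $0\le k\le n$ and $\theta>0$ let $\psi_n^k=\frac{\prod_{i=1}^{k}(\theta+i-1)\prod_{j=1}^{n-k}(\theta+j-1)}{\prod_{l=1}^{n}(2\theta+l-1)}$ (empty products equal $1$). For real arrays $\mu_{C,k},\mu_{D,k},\sigma_{CC,kl},\sigma_{CD,kl},\sigma_{DD,kl}$ ($k,l=0,\ldots,d-1$) define $$F=\sum_{k=0}^{d-1}\binom{d-1}{k}\psi_{d+1}^{k+1}(\mu_{C,k}-\mu_{D,k})+\sum_{k,l=0}^{d-1}\binom{d-1}{k}\binom{d-1}{l}\Big[-\psi_{2d+1}^{k+l+2}(\sigma_{CC,kl}-\sigma_{CD,kl})+\psi_{2d+1}^{k+l+1}(\sigma_{DD,kl}-\sigma_{CD,kl})\Big].$$ Here $\mu_{C,k},\mu_{D,k}$ are the scaled means of the payoffs $a_k$ to a cooperator and $b_k$ to a defector having $k$ cooperating partners among $d-1$ in a group of size $d$, and $\sigma_{CC,kl},\sigma_{CD,kl},\sigma_{DD,kl}$ are the scaled second moments of $a_ka_l$, $a_kb_l$, $b_kb_l$ (each such expectation equals the scaled quantity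 times $\delta$ plus $o(\delta)$). In the paper's large-population weak-selection approximation, the average abundance of $C$ is $\tfrac12+\tfrac{\delta(1-u)}{u}F$, so weak selection favors the abundance of $C$ iff $F>0$. Public goods game: with random benefit $b$ and cost $c$ satisfying $E[b]=\mu_b\delta+o(\delta)$, $E[c]=\mu_c\delta+o(\delta)$, $E[b^2]=\sigma_b^2\delta+o(\delta)$, $E[c^2]=\sigma_c^2\delta+o(\delta)$, $E[bc]=\sigma_{bc}\delta+o(\delta)$, the payoffs are $a_k=\frac{k}{d-1}b-c$ and $b_k=\frac{k}{d-1}b$. Hence $\mu_{C,k}=\frac{k}{d-1}\mu_b-\mu_c$, $\mu_{D,k}=\frac{k}{d-1}\mu_b$, $\sigma_{CC,kl}=\frac{kl}{(d-1)^2}\sigma_b^2+\sigma_c^2-\frac{k+l}{d-1}\sigma_{bc}$, $\sigma_{CD,kl}=\frac{kl}{(d-1)^2}\sigma_b^2-\frac{l}{d-1}\sigma_{bc}$, $\sigma_{DD,kl}=\frac{kl}{(d-1)^2}\sigma_b^2$. *)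

From mathcomp Require Import all_boot all_order all_algebra.
Set Implicit Arguments. Unset Strict Implicit. Unset Printing Implicit Defensive.
Import Order.TTheory GRing.Theory Num.Theory.
Local Open Scope ring_scope.

Definition psi {R : realFieldType} (th : R) (n k : nat) : R :=
  (\prod_(1 <= i < k.+1) (th + i%:R - 1)) *
  (\prod_(1 <= j < (n - k).+1) (th + j%:R - 1)) /
  (\prod_(1 <= l < n.+1) (2 * th + l%:R - 1)).

Definition Fgen {R : realFieldType} (th : R) (d : nat)
  (muC muD : nat -> R) (sCC sCD sDD : nat -> nat -> R) : R :=
  \sum_(0 <= k < d) ('C(d.-1, k))%:R * psi th d.+1 k.+1 * (muC k - muD k)
  + \sum_(0 <= k < d) \sum_(0 <= l < d)
      ('C(d.-1, k))%:R * ('C(d.-1, l))%:R *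
      (- psi th (2 * d).+1 (k + l).+2 * (sCC k l - sCD k l)
       + psi th (2 * d).+1 (k + l).+1 * (sDD k l - sCD k l)).

Section PGG.
Context {R : realFieldType} (d : nat) (mub muc sb2 sc2 sbc : R).
Definition pgg_muC (k : nat) : R := k%:R / (d.-1)%:R * mub - muc.
Definition pgg_muD (k : nat) : R := k%:R / (d.-1)%:R * mub.
Definition pgg_sCC (k l : nat) : R :=
  (k * l)%:R / ((d.-1)%:R ^+ 2) * sb2 + sc2 - (k + l)%:R / (d.-1)%:R * sbc.
Definition pgg_sCD (k l : nat) : R :=
  (k * l)%:R / ((d.-1)%:R ^+ 2) * sb2 - l%:R / (d.-1)%:R * sbc.
Definition pgg_sDD (k l : nat) : R :=
  (k * l)%:R / ((d.-1)%:R ^+ 2) * sb2.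
End PGG.

Definition F_pgg {R : realFieldType} (th : R) (d : nat)
  (mub muc sb2 sc2 sbc : R) : R :=
  Fgen th d (pgg_muC d mub muc) (pgg_muD d mub)
    (pgg_sCC d sb2 sc2 sbc) (pgg_sCD d sb2 sbc) (pgg_sDD d sb2).

(* Writing the rising factorial as x^(n), the weight psi_n^k equals
   w(k, n - k) with w(a, b) = th^(a) th^(b) / (2 th)^(a + b), the probability
   of one fixed draw sequence of a Polya urn.  Since (th + a) + (th + b) =
   2 th + (a + b), these weights obey w(a, b) = w(a + 1, b) + w(a, b + 1), so
   sum_k C(m, k) w(a + k, b + m - k) = w(a, b), and the same sum weighted by k
   equals m w(a + 1, b).  In the public goods game the moment differences
   entering F are -mu_c, sigma_c^2 - k sigma_bc / (d - 1) and
   l sigma_bc / (d - 1), all affine in the indices, so both sums in F collapse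
   to F = w(2, 1) (sigma_bc - sigma_c^2 - 2 mu_c) with w(2, 1) > 0. *)

From mathcomp Require Import all_boot all_order all_algebra.
From mathcomp Require Import ring lra zify.
Set Implicit Arguments. Unset Strict Implicit. Unset Printing Implicit Defensive.
Import Order.TTheory GRing.Theory Num.Theory.
Local Open Scope ring_scope.

Definition rising {R : pzSemiRingType} (x : R) (n : nat) : R :=
  \prod_(i < n) (x + i%:R).

Lemma risingS {R : pzSemiRingType} (x : R) n :
  rising x n.+1 = rising x n * (x + n%:R).
Proof. by rewrite /rising big_ord_recr. Qed.

Lemma rising_shift {R : pzRingType} (x : R) n :
  \prod_(1 <= i < n.+1) (x + i%:R - 1) = rising x n.
Proof.
rewrite big_add1 /= big_mkord; apply: eq_bigr => i _.
by rewrite -addn1 natrD addrA addrK.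
Qed.

Lemma rising_gt0 {R : numDomainType} (x : R) n : 0 < x -> 0 < rising x n.
Proof. by move=> x_gt0; apply: prodr_gt0 => i _; rewrite ltr_wpDr. Qed.

Section PolyaWeights.
Variables (R : numFieldType) (th : R).
Hypothesis th_gt0 : 0 < th.

Definition polya (a b : nat) : R :=
  rising th a * rising th b / rising (2 * th) (a + b).

Lemma polya_gt0 a b : 0 < polya a b.
Proof. by rewrite divr_gt0 ?mulr_gt0 ?rising_gt0 // mulr_gt0. Qed.

Lemma polyaC a b : polya a b = polya b a.
Proof. by rewrite /polya [rising th a * _]mulrC addnC. Qed.

Lemma polyaS a b : polya a b = polya a.+1 b + polya a b.+1.
Proof.
have den_gt0 : 0 < rising (2 * th) (a + b) by rewrite rising_gt0 ?mulr_gt0.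
have step_gt0 : 0 < 2 * th + (a + b)%:R by rewrite ltr_wpDr // mulr_gt0.
rewrite /polya addSn addnS !risingS natrD in step_gt0 *.
by field; rewrite !gt_eqF.
Qed.

Lemma polya_binomial_sum n a b :
  \sum_(0 <= k < n.+1) 'C(n, k)%:R * polya (a + k) (b + (n - k)) = polya a b.
Proof.
elim: n a b => [|n IHn] a b; first by rewrite big_nat1 !addn0 mul1r.
rewrite big_nat_recl // bin0 mul1r addn0 subn0.
under eq_big_nat => k _ do rewrite binS natrD mulrDl.
rewrite big_split /= (polyaS a b) -[polya a.+1 b]IHn -[polya a b.+1]IHn.
rewrite addrA addrC; congr (_ + _).
  by apply: eq_big_nat => k _; rewrite subSS addnS addSn.
rewrite big_nat_recr //= bin_small // mul0r addr0.
rewrite [RHS]big_nat_recl // bin0 mul1r addn0 subn0 addSn addnS.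
congr (_ + _); apply: eq_big_nat => k /andP[_ k_lt].
by congr (_ * polya _ _); lia.
Qed.

Lemma polya_binomial_mean n a b :
  \sum_(0 <= k < n.+1) k%:R * 'C(n, k)%:R * polya (a + k) (b + (n - k))
  = n%:R * polya a.+1 b.
Proof.
case: n => [|n]; first by rewrite big_nat1 !mul0r.
rewrite big_nat_recl // !mul0r add0r -(polya_binomial_sum n a.+1 b) mulr_sumr.
apply: eq_big_nat => k _.
by rewrite -natrM -mul_bin_diag natrM -mulrA subSS addnS addSn.
Qed.

Lemma polya_binomial_affine (x y : R) n a b :
  \sum_(0 <= k < n.+1) 'C(n, k)%:R * (x + y * k%:R) * polya (a + k) (b + (n - k))
  = x * polya a b + y * n%:R * polya a.+1 b.
Proof.
rewrite -mulrA -(polya_binomial_sum n a b) -(polya_binomial_mean n a b).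
by rewrite !mulr_sumr -big_split /=; apply: eq_bigr => k _; ring.
Qed.
End PolyaWeights.

Lemma psi_polya {R : realFieldType} (th : R) n k :
  (k <= n)%N -> psi th n k = polya th k (n - k).
Proof. by move=> k_le_n; rewrite /psi /polya !rising_shift subnKC. Qed.

Section PsiMomentSums.
Variables (R : realFieldType) (th : R) (n : nat).
Hypothesis th_gt0 : 0 < th.

Lemma psi_first_moment_sum (x : R) :
  \sum_(0 <= k < n.+1) 'C(n, k)%:R * psi th n.+2 k.+1 * x = x * polya th 1 1.
Proof.
have := polya_binomial_affine th_gt0 x 0 n 1 1.
rewrite !mul0r addr0 => <-; apply: eq_big_nat => k /andP[_ k_le].
rewrite psi_polya; last lia.
have -> : (n.+2 - k.+1 = 1 + (n - k))%N by lia.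
rewrite add1n; ring.
Qed.

Lemma psi_second_moment_inner (u v : R) k : (k < n.+1)%N ->
  \sum_(0 <= l < n.+1) 'C(n, k)%:R * 'C(n, l)%:R *
    (- psi th (2 * n.+1).+1 (k + l).+2 * (u - v * k%:R)
     + psi th (2 * n.+1).+1 (k + l).+1 * (v * l%:R))
  = 'C(n, k)%:R * ((v * k%:R - u) * polya th k.+2 (n - k).+1
                   + v * n%:R * polya th k.+2 (n - k).+2).
Proof.
move=> k_lt.
have := polya_binomial_affine th_gt0 (v * k%:R - u) 0 n k.+2 (n - k).+1.
have := polya_binomial_affine th_gt0 0 v n k.+1 (n - k).+2.
rewrite !mul0r add0r addr0 => <- <-.
rewrite -big_split mulr_sumr; apply: eq_big_nat => l /andP[_ l_le_n].
rewrite !psi_polya; try lia.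
have -> : ((2 * n.+1).+1 - (k + l).+2 = (n - k).+1 + (n - l))%N by lia.
have -> : ((2 * n.+1).+1 - (k + l).+1 = (n - k).+2 + (n - l))%N by lia.
by rewrite /= !addSn; ring.
Qed.

Lemma psi_second_moment_sum (u v : R) :
  \sum_(0 <= k < n.+1) \sum_(0 <= l < n.+1) 'C(n, k)%:R * 'C(n, l)%:R *
    (- psi th (2 * n.+1).+1 (k + l).+2 * (u - v * k%:R)
     + psi th (2 * n.+1).+1 (k + l).+1 * (v * l%:R))
  = (v * n%:R - u) * polya th 2 1.
Proof.
under eq_big_nat => k /andP[_ k_lt] do rewrite psi_second_moment_inner //.
have -> : (v * n%:R - u) * polya th 2 1
    = (- u * polya th 2 1 + v * n%:R * polya th 3 1) + v * n%:R * polya th 2 2.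
  by rewrite (polyaS th_gt0 2 1); ring.
rewrite -(polya_binomial_affine th_gt0 (- u) v n 2 1).
have := polya_binomial_affine th_gt0 (v * n%:R) 0 n 2 2.
rewrite !mul0r addr0 => <-.
rewrite -big_split; apply: eq_big_nat => k _.
by rewrite /= !add2n add1n; ring.
Qed.
End PsiMomentSums.

Section PublicGoodsMoments.
Variables (R : realFieldType) (d : nat) (mub muc sb2 sc2 sbc : R).

Lemma pgg_muC_sub_muD k : pgg_muC d mub muc k - pgg_muD d mub k = - muc.
Proof. by rewrite /pgg_muC /pgg_muD; ring. Qed.

Lemma pgg_sCC_sub_sCD k l :
  pgg_sCC d sb2 sc2 sbc k l - pgg_sCD d sb2 sbc k l = sc2 - sbc / (d.-1)%:R * k%:R.
Proof. by rewrite /pgg_sCC /pgg_sCD natrD; ring. Qed.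

Lemma pgg_sDD_sub_sCD k l :
  pgg_sDD d sb2 k l - pgg_sCD d sb2 sbc k l = sbc / (d.-1)%:R * l%:R.
Proof. by rewrite /pgg_sDD /pgg_sCD; ring. Qed.
End PublicGoodsMoments.

Lemma F_pggE {R : realFieldType} (th : R) n mub muc sb2 sc2 sbc :
  0 < th -> (0 < n)%N ->
  F_pgg th n.+1 mub muc sb2 sc2 sbc = polya th 2 1 * (sbc - sc2 - 2 * muc).
Proof.
move=> th_gt0 n_gt0; rewrite /F_pgg /Fgen /=.
under eq_bigr => k _ do rewrite pgg_muC_sub_muD.
under [X in _ + X]eq_bigr => k _ do under eq_bigr => l _ do
  rewrite pgg_sCC_sub_sCD pgg_sDD_sub_sCD.
rewrite psi_first_moment_sum // psi_second_moment_sum //.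
rewrite (polyaS th_gt0 1 1) (polyaC th 1 2).
by field; rewrite pnatr_eq0 -lt0n.
Qed.

Theorem mainTheorem3 (R : realFieldType) (d : nat) (th : R) :
  (2 <= d)%N -> 0 < th ->
  (forall mub muc sb2 sc2 sbc : R,
     0 < F_pgg th d mub muc sb2 sc2 sbc <-> 2 * muc < sbc - sc2)
  /\ (forall mub muc sb2 sbc s1 s2 : R, s1 < s2 ->
        F_pgg th d mub muc sb2 s2 sbc < F_pgg th d mub muc sb2 s1 sbc)
  /\ (forall mub muc sb2 sc2 s1 s2 : R, s1 < s2 ->
        F_pgg th d mub muc sb2 sc2 s1 < F_pgg th d mub muc sb2 sc2 s2).
Proof.
case: d => [|n] // n_gt0 th_gt0.
have p21_gt0 := polya_gt0 th_gt0 2 1.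
split; [|split] => *; rewrite !F_pggE //.
- by rewrite pmulr_rgt0 // subr_gt0.
- by rewrite ltr_pM2l //; lra.
- by rewrite ltr_pM2l //; lra.
Qed.
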